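(* Let $k\ge2$, let $r_1,\dots,r_k$ be positive integers and let $a\le b$ be positive integers. Then \[ N_k(r_1,\dots,r_k;a)\,N_k(r_1,\dots,r_k;b)\le N_k^{(1)}(r_1,\dots,r_k;a,b)\,N_k^{(1)}(r_1,\dots,r_k;b,a). \]
   Context: $K(r_1,\dots,r_k)$ is the complete $k$-partite graph with parts $V_1,\dots,V_k$ of sizes $r_1,\dots,r_k$. $N_k(r_1,\dots,r_k;c)$ is the number of proper colourings of $K(r_1,\dots,r_k)$ with colours from a set of size $c$. Fix sets $A\subseteq B$ with $|A|=a$, $|B|=b$. $N_k^{(1)}(r_1,\dots,r_k;a,b)$ is the number of proper colourings of $K(r_1,\dots,r_k)$ in which $V_1$ receives colours from $A$ and $V_2,\dots,V_k$ receive colours from $B$; $N_k^{(1)}(r_1,\dots,r_k;b,a)$ is the number of proper colourings in which $V_1$ receives colours from $B$ and $V_2,\dots,V_k$ receive colours from $A$. *)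

From mathcomp Require Import all_boot.
Set Implicit Arguments. Unset Strict Implicit. Unset Printing Implicit Defensive.

(* Vertex set of the complete k-partite graph K(r_1,...,r_k): a vertex is a
   pair (i, j) with i : 'I_k the index of its part and j : 'I_(r i).
   Part V_1 of the paper is the part with index 0. *)
Definition vert (k : nat) (r : 'I_k -> nat) : finType :=
  {i : 'I_k & 'I_(r i)}.

Definition kp_adj k (r : 'I_k -> nat) (u v : vert r) : bool := tag u != tag v.

Definition proper k (r : 'I_k -> nat) (C : finType) (f : {ffun vert r -> C}) : bool :=
  [forall u, forall v, kp_adj u v ==> (f u != f v)].

Definition Nk k (r : 'I_k -> nat) (c : nat) : nat :=
  #|[set f : {ffun vert r -> 'I_c} | proper f]|.

Definition Nk1 k (r : 'I_k -> nat) (C : finType) (X Y : {set C}) : nat :=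
  #|[set f : {ffun vert r -> C} | proper f &&
      [forall v, f v \in (if val (tag v) == 0 then X else Y)]]|.

(* A colouring counted by N^(1)(X, Y) is a proper colouring g of the parts
   other than V_1 with colours in Y, together with an arbitrary map from
   V_1 to the colours of X not used by g.  Hence, with n = |V_1|,
   N^(1)(X, Y) = sum_g |X \ im g|^n, and N(c) is the case X = Y, |X| = c.
   Every permutation p of B permutes the colourings g with colours in B, and
   on average over p the set A \ p(S) has |A| |B \ S| / |B| elements; by the
   power mean inequality,
     a^n sum_g |B \ im g|^n <= b^n sum_g |A \ im g|^n   (g with colours in B).
   Multiplying by sum_h |A \ im h|^n over the colourings h with colours in A
   and using |A \ S| b <= a |B \ S| for S in A gives the claim. *)

From Pilot Require Import Defs.
From mathcomp Require Import all_boot fingroup perm action zify.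
Set Implicit Arguments. Unset Strict Implicit. Unset Printing Implicit Defensive.

Lemma leq_expn2r e : {homo expn^~ e : m n / m <= n}.
Proof. by case: e => // e m n; rewrite leq_exp2r. Qed.

Section PowerMean.

Variables (I : finType) (P : {pred I}) (y : I -> nat).

Lemma leq_mul_expn_add x z n : x * z ^ n + z * x ^ n <= x ^ n.+1 + z ^ n.+1.
Proof.
wlog le_xz : x z / x <= z.
  by move=> W; case: (leqP x z) => [/W | /ltnW/W]; rewrite // addnC [_ + x ^ _]addnC.
by have := leq_expn2r n le_xz; rewrite !expnS; nia.
Qed.

Lemma chebyshev_sum_expn n :
  (\sum_(i in P) y i) * (\sum_(i in P) y i ^ n) <= #|P| * \sum_(i in P) y i ^ n.+1.
Proof.
rewrite -(@leq_pmul2l 2) // big_distrl /=.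
under eq_bigr do rewrite big_distrr /=.
rewrite mul2n -addnn {2}exchange_big -big_split /=.
under eq_bigr do rewrite -big_split /=.
apply: (@leq_trans (\sum_(i in P) \sum_(j in P) (y i ^ n.+1 + y j ^ n.+1))).
  by apply: leq_sum => i _; apply: leq_sum => j _; apply: leq_mul_expn_add.
under eq_bigr do rewrite big_split sum_nat_const /=.
by rewrite big_split /= -big_distrr sum_nat_const /= mul2n -addnn.
Qed.

Lemma power_mean_sum n :
  (\sum_(i in P) y i) ^ n * #|P| <= #|P| ^ n * \sum_(i in P) y i ^ n.
Proof.
elim: n => [|n IH].
  by rewrite !expn0 !mul1n; under eq_bigr do rewrite expn0; rewrite sum1_card.
rewrite expnS -mulnA (leq_trans (leq_mul (leqnn _) IH)) //.
by rewrite mulnCA expnS -mulnA [X in _ <= X]mulnCA leq_mul2l chebyshev_sum_expn orbT.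
Qed.

End PowerMean.

Lemma leq_card_setD_mul (T : finType) (S A B : {set T}) :
  S \subset A -> A \subset B -> #|A :\: S| * #|B| <= #|A| * #|B :\: S|.
Proof.
move=> SA AB; rewrite !cardsDS ?(subset_trans SA AB) //.
have := subset_leq_card SA; have := subset_leq_card AB; nia.
Qed.

Lemma leq_mul_sum_expn (I : finType) (P : {pred I}) (u v : I -> nat) a b X Y n :
  0 < a -> a ^ n * X <= b ^ n * Y -> (forall i, i \in P -> u i * b <= a * v i) ->
  (\sum_(i in P) u i ^ n) * X <= Y * \sum_(i in P) v i ^ n.
Proof.
move=> a_gt0 XY uv; have an_gt0 : 0 < a ^ n by rewrite expn_gt0 a_gt0.
rewrite -(leq_pmul2l an_gt0) mulnCA.
apply: leq_trans (leq_mul (leqnn _) XY) _.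
rewrite mulnA mulnC [X in _ <= X]mulnCA leq_mul2l big_distrl big_distrr /=.
by apply/orP; right; apply: leq_sum => i Pi; rewrite -!expnMn leq_expn2r ?uv.
Qed.

Section SymmetricGroup.

Variables (C : finType) (B : {set C}).

Lemma card_Sym_mapsto (X : {set C}) y : y \in B -> X \subset B ->
  #|B| * #|[set p in Sym B | p y \in X]| = #|X| * #|Sym B|.
Proof.
move=> yB XB.
have mapsto (Z : {set C}) : Z \subset B ->
    #|[set p in Sym B | p y \in Z]| = #|Z| * #|('C_(Sym B)[y | 'P])%g|.
  move=> ZB; rewrite -sum1_card.
  rewrite (partition_big (fun p : {perm C} => p y) (mem Z)) /=; last first.
    by move=> p; rewrite inE => /andP[].
  rewrite -sum_nat_const; apply: eq_bigr => x xZ.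
  (* The permutations of Sym B mapping y to x form a coset of the stabiliser of y. *)
  have Sym_t : tperm y x \in Sym B.
    rewrite inE; apply: subset_trans (tperm_on y x) _.
    by rewrite subUset !sub1set yB (subsetP ZB).
  rewrite -(card_rcoset _ (tperm y x)) -(amove_act 'P y (subsetT _) Sym_t).
  rewrite /= apermE tpermL sum1_card.
  apply: eq_card => p; rewrite unfold_in !inE /= apermE.
  by case: eqP => [->|]; rewrite ?xZ ?andbT ?andbF.
have Sym_closed : [set p in Sym B | p y \in B] = Sym B.
  by apply/setP => p; rewrite !inE andb_idr // => /perm_closed->.
by rewrite !mapsto // -{2}Sym_closed mapsto // mulnCA.
Qed.

Lemma card_setD_imset_perm (A S : {set C}) (p : {perm C}) :
  #|A :\: p @: S| = #|p @^-1: A :\: S|.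
Proof.
rewrite -(card_preimset _ (@perm_inj _ p)); apply: eq_card => x.
by rewrite !inE mem_imset //; apply: perm_inj.
Qed.

Lemma sum_card_setD_Sym (A S : {set C}) : A \subset B ->
  #|B| * \sum_(p in Sym B) #|A :\: p @: S| = #|A| * #|B :\: S| * #|Sym B|.
Proof.
move=> AB.
have card_p p : p \in Sym B -> #|A :\: p @: S| = \sum_(y in B :\: S) (p y \in A).
  rewrite inE => SymB_p; rewrite card_setD_imset_perm -sum1_card big_mkcond /=.
  rewrite [RHS]big_mkcond; apply: eq_bigr => y _; rewrite !inE.
  case pyA: (p y \in A); last by rewrite andbF; case: ifP.
  by rewrite -(perm_closed _ SymB_p) (subsetP AB _ pyA) !andbT.
rewrite (eq_bigr _ card_p) exchange_big big_distrr /=.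
rewrite (eq_bigr (fun=> #|A| * #|Sym B|)) => [|y].
  by rewrite sum_nat_const mulnCA mulnA.
rewrite inE => /andP[_ yB].
by rewrite -(card_Sym_mapsto yB AB) -sum1dep_card big_mkcondr.
Qed.

Lemma Sym_power_mean (A S : {set C}) n : A \subset B ->
  (#|A| * #|B :\: S|) ^ n * #|Sym B| <=
  #|B| ^ n * \sum_(p in Sym B) #|A :\: p @: S| ^ n.
Proof.
move=> AB; have Pn_gt0 : 0 < #|Sym B| ^ n by rewrite expn_gt0 cardG_gt0.
rewrite -(leq_pmul2l Pn_gt0) mulnA -expnMn [_ * (_ * _)]mulnC -sum_card_setD_Sym //.
by rewrite expnMn -mulnA [X in _ <= X]mulnCA leq_mul2l power_mean_sum orbT.
Qed.

End SymmetricGroup.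

Section Colourings.

Variables (k : nat) (r : 'I_k -> nat) (C : finType).
Implicit Types (X Y : {set C}) (f : {ffun vert r -> C}) (g : {ffun vert r -> option C}).

Lemma properP (D : finType) (f : {ffun vert r -> D}) :
  reflect (forall u v, tag u != tag v -> f u != f v) (Defs.proper f).
Proof.
apply: (iffP forallP) => [H u v | H u]; first exact: implyP (forallP (H u) v).
by apply/forallP => v; apply/implyP; apply: H.
Qed.

Lemma proper_comp (D E : finType) (h : D -> E) (f : {ffun vert r -> D}) :
  injective h -> Defs.proper [ffun v => h (f v)] = Defs.proper f.
Proof.
by move=> h_inj; apply/properP/properP => H u v /H; rewrite !ffunE (inj_eq h_inj).
Qed.

Definition in_V1 (v : vert r) : bool := val (tag v) == 0.

Lemma in_V1_tag u v : in_V1 u -> in_V1 v -> tag u = tag v.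
Proof. by move=> /eqP u1 /eqP v1; apply: val_inj; rewrite u1 v1. Qed.

Lemma tag_neq_V1 u v : in_V1 u -> ~~ in_V1 v -> tag u != tag v.
Proof. by move=> u1; apply: contraNneq => uv; rewrite /in_V1 -uv. Qed.

Definition colourings1 (X Y : {set C}) : {set {ffun vert r -> C}} :=
  [set f | Defs.proper f && [forall v, f v \in if in_V1 v then X else Y]].

Lemma Nk_Nk1 (X : {set C}) : Nk r #|X| = Nk1 r X X.
Proof.
pose relabel (f : {ffun vert r -> 'I_#|X|}) : {ffun vert r -> C} :=
  [ffun v => enum_val (f v)].
have relabel_inj : injective relabel.
  move=> f g /ffunP E; apply/ffunP => v.
  by have := E v; rewrite !ffunE => /enum_val_inj.
rewrite /Nk -(card_imset _ relabel_inj); apply: eq_card => g; apply/imsetP/idP.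
- case=> f; rewrite inE => fP ->; rewrite inE proper_comp ?fP; last exact: enum_val_inj.
  by apply/forallP => v; rewrite ffunE if_same enum_valP.
- rewrite inE => /andP[gP /forallP gX].
  have gX' v : g v \in X by have := gX v; rewrite if_same.
  pose f : {ffun vert r -> 'I_#|X|} := [ffun v => enum_rank_in (gX' v) (g v)].
  have g_f : g = [ffun v => enum_val (f v)].
    by apply/ffunP => v; rewrite !ffunE (enum_rankK_in _ (gX' v)).
  by exists f; rewrite // inE -(proper_comp _ enum_val_inj) -g_f.
Qed.

Definition restrict_V1 (f : {ffun vert r -> C}) : {ffun vert r -> option C} :=
  [ffun v => if in_V1 v then None else Some (f v)].

(* Proper colourings of K(r) - V_1 with colours in Y, extended by None on V_1;
   properness on all of vert r is the same condition, since None differs from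
   every colour and V_1 is an independent set. *)
Definition colourings_off_V1 (Y : {set C}) : {set {ffun vert r -> option C}} :=
  [set g | Defs.proper g &&
           [forall v, g v \in if in_V1 v then [set None] else Some @: Y]].

Definition used_colours (g : {ffun vert r -> option C}) : {set C} :=
  [set c | Some c \in codom g].

Lemma used_colours_sub Y g : g \in colourings_off_V1 Y -> used_colours g \subset Y.
Proof.
rewrite inE => /andP[_ /forallP gY]; apply/subsetP => c; rewrite inE => /codomP[v gv].
by have := gY v; rewrite -gv; case: ifP; rewrite ?inE // mem_imset //; apply: Some_inj.
Qed.

Lemma used_colours_restrict_V1 f v : ~~ in_V1 v -> f v \in used_colours (restrict_V1 f).
Proof. by move=> /negbTE v1; rewrite inE; apply/codomP; exists v; rewrite ffunE v1. Qed.

Lemma restrict_V1_proper f :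
  Defs.proper f = Defs.proper (restrict_V1 f) &&
                  [forall v, in_V1 v ==> (f v \notin used_colours (restrict_V1 f))].
Proof.
apply/properP/andP => [f_pr | [/properP g_pr /forallP f_free] u v uv].
  split; first apply/properP => u v uv; rewrite ?ffunE.
    case: ifP => u1; case: ifP => v1 //=; last exact: f_pr.
    by move: uv; rewrite (in_V1_tag u1 v1) eqxx.
  apply/forallP => v; apply/implyP => v1; rewrite inE; apply/negP => /codomP[u].
  rewrite ffunE; case: ifP => // /negbT u1 [fvu].
  by have := f_pr v u (tag_neq_V1 v1 u1); rewrite fvu eqxx.
case u1: (in_V1 u); case v1: (in_V1 v).
- by move: uv; rewrite (in_V1_tag u1 v1) eqxx.
- have := implyP (f_free u) u1; apply: contra => /eqP->.
  by rewrite used_colours_restrict_V1 ?v1.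
- have := implyP (f_free v) v1; apply: contra => /eqP<-.
  by rewrite used_colours_restrict_V1 ?u1.
- by have := g_pr u v uv; rewrite !ffunE u1 v1.
Qed.

Lemma restrict_V1_colourings X Y f :
  f \in colourings1 X Y -> restrict_V1 f \in colourings_off_V1 Y.
Proof.
rewrite !inE restrict_V1_proper => /andP[/andP[-> _] /forallP fY] /=.
apply/forallP => v; have := fY v; rewrite ffunE.
by case: ifP => _; rewrite ?inE // mem_imset //; apply: Some_inj.
Qed.

Definition extension_dom X g (v : vert r) : {set C} :=
  if in_V1 v then X :\: used_colours g else [set c | Some c == g v].

Lemma restrict_V1_fibre X Y g f : g \in colourings_off_V1 Y ->
  (f \in colourings1 X Y) && (restrict_V1 f == g) = (f \in family (extension_dom X g)).
Proof.
move=> gY; apply/andP/familyP => [[fXY /eqP <-{g gY}] v | f_ext].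
  move: fXY; rewrite inE restrict_V1_proper.
  case/andP=> /andP[_ /forallP f_free] /forallP fX.
  rewrite /extension_dom ffunE; case: ifP => v1; last by rewrite inE v1.
  by rewrite inE (implyP (f_free v) v1); have := fX v; rewrite v1.
have g_f : restrict_V1 f = g.
  apply/ffunP => v; move: gY (f_ext v); rewrite inE => /andP[_ /forallP/(_ v)].
  rewrite /extension_dom ffunE; case: ifP => _; first by rewrite inE => /eqP->.
  by rewrite inE => _ /eqP->.
move: gY f_ext; rewrite -{}g_f inE => /andP[g_pr /forallP gY] f_ext; split=> //.
rewrite inE restrict_V1_proper g_pr /=; apply/andP; split; apply/forallP => v.
  by apply/implyP => v1; have := f_ext v; rewrite /extension_dom v1 => /setDP[].
have := gY v; have := f_ext v; rewrite /extension_dom ffunE; case: ifP => _.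
  by case/setDP.
by rewrite mem_imset //; apply: Some_inj.
Qed.

Lemma Nk1_sum X Y :
  Nk1 r X Y = \sum_(g in colourings_off_V1 Y) #|X :\: used_colours g| ^ #|in_V1|.
Proof.
rewrite -[Nk1 r X Y]/#|colourings1 X Y| -sum1_card.
rewrite (partition_big restrict_V1 [in colourings_off_V1 Y]) => [|f]; last first.
  exact: restrict_V1_colourings.
apply: eq_bigr => g gY; rewrite (eq_bigl _ _ (fun f => restrict_V1_fibre X f gY)).
rewrite sum1_card card_family foldrE big_image /= (bigID in_V1) /=.
rewrite [X in _ * X]big1 ?muln1 => [|v /negbTE v1]; last first.
  move: gY; rewrite /extension_dom v1 inE => /andP[_ /forallP/(_ v)].
  rewrite v1 => /imsetP[c _ ->].
  by rewrite -(cards1 c); apply: eq_card => d; rewrite !inE.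
by rewrite -prod_nat_const; apply: eq_bigr => v v1; rewrite /extension_dom v1.
Qed.

Definition relabel (p : {perm C}) g : {ffun vert r -> option C} :=
  [ffun v => omap p (g v)].

Lemma relabelK p : cancel (relabel p) (relabel p^-1).
Proof. by move=> g; apply/ffunP => v; rewrite !ffunE omapK //; apply: permK. Qed.

Lemma used_colours_relabel p g : used_colours (relabel p g) = p @: used_colours g.
Proof.
apply/setP => c; rewrite inE; apply/codomP/imsetP => [[v] | [d]].
  rewrite ffunE; case gv: (g v) => [d|] //= [->].
  by exists d => //; rewrite inE; apply/codomP; exists v; rewrite gv.
by rewrite inE => /codomP[v gv] ->; exists v; rewrite ffunE -gv.
Qed.

Lemma relabel_colourings_off_V1 (B : {set C}) p g : p \in Sym B ->
  (relabel p g \in colourings_off_V1 B) = (g \in colourings_off_V1 B).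
Proof.
suff relabel_off q h : q \in Sym B ->
    h \in colourings_off_V1 B -> relabel q h \in colourings_off_V1 B.
  move=> pB; apply/idP/idP; last exact: relabel_off.
  by rewrite -{2}(relabelK p g); apply: relabel_off; rewrite groupV.
rewrite !inE => qB /andP[h_pr /forallP hB]; rewrite proper_comp ?h_pr /=; last first.
  exact/inj_omap/perm_inj.
apply/forallP => v; have := hB v; rewrite ffunE.
case: ifP => _; first by rewrite !inE => /eqP->.
by case/imsetP=> c cB ->; rewrite /= imset_f // perm_closed.
Qed.

Lemma sum_relabel (B : {set C}) p (F : {ffun vert r -> option C} -> nat) :
  p \in Sym B ->
  \sum_(g in colourings_off_V1 B) F (relabel p g) = \sum_(g in colourings_off_V1 B) F g.
Proof.
move=> pB; rewrite [RHS](reindex_inj (can_inj (relabelK p))) /=.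
by apply: eq_bigl => g; rewrite relabel_colourings_off_V1.
Qed.

Lemma leq_card_setD_used_colours (A B : {set C}) n : A \subset B ->
  #|A| ^ n * \sum_(g in colourings_off_V1 B) #|B :\: used_colours g| ^ n <=
  #|B| ^ n * \sum_(g in colourings_off_V1 B) #|A :\: used_colours g| ^ n.
Proof.
move=> AB; rewrite -(leq_pmul2l (cardG_gt0 (Sym_group B))).
have -> : #|Sym B| *
      (#|B| ^ n * \sum_(g in colourings_off_V1 B) #|A :\: used_colours g| ^ n) =
    \sum_(g in colourings_off_V1 B)
        #|B| ^ n * \sum_(p in Sym B) #|A :\: p @: used_colours g| ^ n.
  rewrite -big_distrr /= mulnCA; congr (_ * _).
  rewrite -sum_nat_const [RHS]exchange_big /=.
  apply: eq_bigr => p pB; rewrite -(sum_relabel _ pB).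
  by apply: eq_bigr => g _; rewrite used_colours_relabel.
rewrite !big_distrr /=; apply: leq_sum => g _.
by rewrite -expnMn mulnC Sym_power_mean.
Qed.

End Colourings.

Theorem lemma6p4 (k : nat) (r : 'I_k -> nat) (C : finType) (A B : {set C}) :
  2 <= k ->
  (forall i, 0 < r i) ->
  0 < #|A| ->
  A \subset B ->
  Nk r #|A| * Nk r #|B| <= Nk1 r A B * Nk1 r B A.
Proof.
(* The inequality holds for every k and every r. *)
move=> _ _ A_gt0 AB; rewrite !Nk_Nk1 !Nk1_sum.
apply: leq_mul_sum_expn A_gt0 (leq_card_setD_used_colours _ _ AB) _ => g gA.
exact: leq_card_setD_mul (used_colours_sub gA) AB.
Qed.
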